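(* Let $\mathcal{E}=[\theta,u]$ be an interval effect algebra that generates its ordered linear space, has an order-determining set of states, and is unrestricted. An effect $a\in\mathcal{E}$ is repeatable if and only if $a=\theta$ or there exists $s\in\mathcal{S}(\mathcal{E})$ with $s(a)=1$.
   Context: Let $V$ be a real vector space with zero $\theta$ and $K\subseteq V$ a positive cone ($\mathbb{R}^+K\subseteq K$, $K+K\subseteq K$, $K\cap(-K)=\{\theta\}$), ordered by $x\le y$ iff $y-x\in K$. For $u\in K$, $u\ne\theta$, $\mathcal{E}=[\theta,u]=\{x\in K:x\le u\}$; for $a,b\in\mathcal{E}$, $a\perp b$ means $a+b\le u$. $\mathcal{E}$ generates $V$ means $K=\mathbb{R}^+\mathcal{E}$ and $V=K-K$. A state is $s\colon\mathcal{E}\to[0,1]$ with $s(u)=1$ and $s(a+b)=s(a)+s(b)$ whenever $a\perp b$; $\mathcal{S}(\mathcal{E})$ is the set of all states, assumed order-determining: $a\le b$ iff $s(a)\le s(b)$ for all $s$. Affine = preserves finite convex combinations. Unrestricted: every affine $f\colon\mathcal{S}(\mathcal{E})\to[0,1]$ is of the form $f(s)=s(c)$ for some $c\in\mathcal{E}$. A substate is $\lambda s$, $\lambda\in[0,1]$, $s\in\mathcal{S}(\mathcal{E})$. An operation on $\mathcal{E}$ is an affine map $\mathcal{I}$ from $\mathcal{S}(\mathcal{E})$ to substates on $\mathcal{E}$; its dual $\mathcal{I}^*\colon\mathcal{E}\to\mathcal{E}$ is the unique affine map with $s[\mathcal{I}^*(b)]=\mathcal{I}(s)(b)$ for all $s,b$.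 An effect $a$ is $\mathcal{I}$-repeatable if $\mathcal{I}^*(u)=a$ and $\mathcal{I}^*(a)=a$; $a$ is repeatable if it is $\mathcal{I}$-repeatable for some operation $\mathcal{I}$ on $\mathcal{E}$. *)

From HB Require Import structures.
From mathcomp Require Import all_boot all_order all_algebra.
From mathcomp Require Import reals.
Set Implicit Arguments. Unset Strict Implicit. Unset Printing Implicit Defensive.
Import Order.TTheory GRing.Theory Num.Theory.
Local Open Scope ring_scope.

Section EffectAlgebra.
Variables (R : realType) (V : lmodType R) (K : V -> Prop) (u : V).

Definition positive_cone : Prop :=
  (forall (r : R) x, 0 <= r -> K x -> K (r *: x)) /\
  (forall x y, K x -> K y -> K (x + y)) /\
  (forall x, K x -> K (- x) -> x = 0).

Definition cle (x y : V) : Prop := K (y - x).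

Definition Eff (x : V) : Prop := K x /\ cle x u.

Definition orth (a b : V) : Prop := cle (a + b) u.

Definition generates : Prop :=
  (forall x, K x <-> exists (r : R) e, 0 <= r /\ Eff e /\ x = r *: e) /\
  (forall v, exists x y, K x /\ K y /\ v = x - y).

(* States.  A state is represented as a function V -> R that vanishes
   outside E (so that the representation of a state is unique). *)
Definition is_state (s : V -> R) : Prop :=
  (forall x, ~ Eff x -> s x = 0) /\
  (forall x, Eff x -> 0 <= s x <= 1) /\
  s u = 1 /\
  (forall a b, Eff a -> Eff b -> orth a b -> s (a + b) = s a + s b).

Definition order_determining : Prop :=
  forall a b, Eff a -> Eff b -> (cle a b <-> forall s, is_state s -> s a <= s b).

Definition ccomb (l : R) (s t : V -> R) : V -> R :=
  fun x => l * s x + (1 - l) * t x.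

Definition affine_fun (f : (V -> R) -> R) : Prop :=
  forall (l : R) s t, 0 <= l <= 1 -> is_state s -> is_state t ->
    f (ccomb l s t) = l * f s + (1 - l) * f t.

Definition unrestricted : Prop :=
  forall f : (V -> R) -> R, affine_fun f ->
    (forall s, is_state s -> 0 <= f s <= 1) ->
    exists c, Eff c /\ forall s, is_state s -> f s = s c.

Definition is_substate (t : V -> R) : Prop :=
  exists (l : R) s, 0 <= l <= 1 /\ is_state s /\ t = (fun x => l * s x).

Definition operation (I : (V -> R) -> (V -> R)) : Prop :=
  (forall s, is_state s -> is_substate (I s)) /\
  (forall (l : R) s t, 0 <= l <= 1 -> is_state s -> is_state t ->
     I (ccomb l s t) = ccomb l (I s) (I t)).

Definition dual_of (I : (V -> R) -> (V -> R)) (Istar : V -> V) : Prop :=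
  (forall b, Eff b -> Eff (Istar b)) /\
  (forall s b, is_state s -> Eff b -> s (Istar b) = I s b).

Definition repeatable_for (I : (V -> R) -> (V -> R)) (a : V) : Prop :=
  exists Istar, dual_of I Istar /\ Istar u = a /\ Istar a = a.

Definition repeatable (a : V) : Prop :=
  exists I, operation I /\ repeatable_for I a.

End EffectAlgebra.

From HB Require Import structures.
From mathcomp Require Import all_boot all_order all_algebra.
From mathcomp Require Import reals.
From mathcomp Require Import ring lra.
From Stdlib Require Import ClassicalEpsilon FunctionalExtensionality.
Import Order.TTheory GRing.Theory Num.Theory.
Local Open Scope ring_scope.

(* If a is I-repeatable and I s = l s', then I^*(u) = a gives s a = l and
   I^*(a) = a gives s a = l s' a, so s' a = 1 as soon as s a > 0; if no state
   is positive on a, then a = 0 because the states are order-determining.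
   Conversely, if s a = 1 (or a = 0), the measure-and-prepare operation
   t |-> t(a) s is an operation whose dual exists by unrestrictedness; as
   states separate effects, that dual maps u and a to a. *)

Set Implicit Arguments.

Section IntervalEffectAlgebra.
Variables (R : realType) (V : lmodType R) (K : V -> Prop) (u : V).
Hypotheses (hK : positive_cone K) (huK : K u).

Lemma cone0 : K 0.
Proof. by rewrite -(scale0r u); apply: hK.1. Qed.

Lemma Eff0 : Eff K u 0.
Proof. by split; [exact: cone0 | rewrite /cle subr0]. Qed.

Lemma Eff_unit : Eff K u u.
Proof. by split; [exact: huK | rewrite /cle subrr; exact: cone0]. Qed.

Lemma cle_anti x y : cle K x y -> cle K y x -> x = y.
Proof.
rewrite /cle => hxy hyx; apply/eqP; rewrite eq_sym -subr_eq0; apply/eqP.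
by apply: hK.2.2; rewrite ?opprB.
Qed.

Lemma state0 s : is_state K u s -> s 0 = 0.
Proof.
case=> _ [_ [_ hadd]].
have := hadd 0 0 Eff0 Eff0; rewrite /orth /cle addr0 subr0 => /(_ huK).
lra.
Qed.

Lemma state_range s x : is_state K u s -> 0 <= s x <= 1.
Proof.
case=> hout [hrange _]; have [/hrange //|/hout ->] := classic (Eff K u x).
by rewrite lexx ler01.
Qed.

Hypothesis hod : order_determining K u.

Lemma Eff_eq_of_states x y : Eff K u x -> Eff K u y ->
  (forall s, is_state K u s -> s x = s y) -> x = y.
Proof.
move=> hx hy hxy; apply: cle_anti.
- by apply/(hod hx hy) => s /hxy ->.
- by apply/(hod hy hx) => s /hxy ->.
Qed.

Lemma exists_state : u <> 0 -> exists s, is_state K u s.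
Proof.
move=> hu0; apply: NNPP => hnone; apply: hu0; apply: cle_anti.
- by apply/(hod Eff_unit Eff0) => s hs; case: hnone; exists s.
- exact: Eff0.2.
Qed.

Lemma eq0_of_states_nonpos a : Eff K u a ->
  (forall s, is_state K u s -> s a <= 0) -> a = 0.
Proof.
move=> ha hnpos; apply: Eff_eq_of_states => // [|s hs]; first exact: Eff0.
rewrite (state0 hs); apply/eqP; rewrite eq_le hnpos //.
by case/andP: (state_range a hs).
Qed.

Lemma repeatable_for_state_eq1 I a s : Eff K u a -> operation K u I ->
  repeatable_for K u I a -> is_state K u s -> 0 < s a ->
  exists s', is_state K u s' /\ s' a = 1.
Proof.
move=> ha [hsub _] [Is [[_ hIs] [Iu Ia]]] hs hpos.
have [l [s' [_ [hs' eI]]]] := hsub s hs.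
have sa_l : s a = l by rewrite -{1}Iu (hIs s u hs Eff_unit) eI hs'.2.2.1 mulr1.
have sa_ls'a : s a = l * s' a by rewrite -{1}Ia (hIs s a hs ha) eI.
exists s'; split => //; apply: (mulfI (x := l)); first by rewrite -sa_l gt_eqF.
by rewrite -sa_ls'a sa_l mulr1.
Qed.

Lemma repeatable_eq0_or_state_eq1 a : Eff K u a -> repeatable K u a ->
  a = 0 \/ exists s, is_state K u s /\ s a = 1.
Proof.
move=> ha [I [hI hrep]].
have [[s [hs hpos]]|hnone] := classic (exists s, is_state K u s /\ 0 < s a).
  by right; exact: repeatable_for_state_eq1 ha hI hrep hs hpos.
left; apply: eq0_of_states_nonpos => // s hs; rewrite leNgt.
by apply/negP => hpos; apply: hnone; exists s.
Qed.

Definition measure_prepare (a : V) (s : V -> R) : (V -> R) -> (V -> R) :=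
  fun t x => t a * s x.

Lemma operation_measure_prepare a s : is_state K u s ->
  operation K u (measure_prepare a s).
Proof.
move=> hs; split=> [t ht|l t1 t2 _ _ _].
  by exists (t a), s; split; first exact: state_range.
by apply: functional_extensionality => x; rewrite /measure_prepare /ccomb; ring.
Qed.

Hypothesis hunr : unrestricted K u.

Lemma dual_measure_prepare a s : is_state K u s ->
  exists Is, dual_of K u (measure_prepare a s) Is.
Proof.
move=> hs.
pose represents b c := Eff K u c /\ forall t, is_state K u t -> t a * s b = t c.
have [Is hIs] : exists Is : V -> V, forall b, represents b (Is b).
  apply: (choice represents) => b; apply: (hunr (f := fun t => t a * s b)).
    by move=> l t1 t2 _ _ _; rewrite /ccomb; ring.
  move=> t ht; have /andP [ta0 ta1] := state_range a ht.
  have /andP [sb0 sb1] := state_range b hs.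
  by rewrite mulr_ge0 //= -(mulr1 1) ler_pM.
by exists Is; split=> [b _|t b ht _]; [case: (hIs b) | case: (hIs b) => _ <-].
Qed.

Lemma repeatable_measure_prepare a s : Eff K u a -> is_state K u s ->
  (forall t, is_state K u t -> t a * s a = t a) -> repeatable K u a.
Proof.
move=> ha hs hfix; have [Is [hIE hIs]] := dual_measure_prepare a hs.
exists (measure_prepare a s); split; first exact: operation_measure_prepare.
exists Is; split; first by split.
split.
- apply: (Eff_eq_of_states (hIE _ Eff_unit) ha) => t ht.
  by rewrite (hIs t u ht Eff_unit) /measure_prepare hs.2.2.1 mulr1.
- apply: (Eff_eq_of_states (hIE _ ha) ha) => t ht.
  by rewrite (hIs t a ht ha) /measure_prepare hfix.
Qed.

End IntervalEffectAlgebra.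

Theorem corollary3p4 (R : realType) (V : lmodType R) (K : V -> Prop) (u : V)
  (hK : positive_cone K) (huK : K u) (hu0 : u <> 0)
  (hgen : generates K u) (hod : order_determining K u)
  (hunr : unrestricted K u) (a : V) (ha : Eff K u a) :
  repeatable K u a <-> (a = 0 \/ exists s, is_state K u s /\ s a = 1).
Proof.
split; first exact: repeatable_eq0_or_state_eq1.
case=> [a0 | [s [hs sa1]]].
- have [s hs] := exists_state hK huK hod hu0.
  apply: (repeatable_measure_prepare hK huK hod hunr ha hs) => t ht.
  by rewrite a0 (state0 hK huK ht) mul0r.
- apply: (repeatable_measure_prepare hK huK hod hunr ha hs) => t _.
  by rewrite sa1 mulr1.
Qed.
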